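(* Let $\mathbb{F}$ be a field and $\mathcal{J}Spin_n(\mathbb{F})$ the spin factor with basis $\mathcal{V}=\{\mathbf{1},s_1,\dots,s_n\}$, where $\{s_1,\dots,s_n\}$ is a spin system. For every 1-automorphism $\Phi$ of $\mathcal{J}Spin_n(\mathbb{F})$, the $(n+1)\times(n+1)$ matrix of the linear operator $\Phi$ with respect to $\mathcal{V}$ is symmetric.
   Context: $\mathcal{J}Spin_n(\mathbb{F})$ is the Jordan algebra with basis $\mathbf{1},s_1,\dots,s_n$ and product determined bilinearly by $\mathbf{1}$ being the identity, $s_is_i=\mathbf{1}$ and $s_is_j=0$ for $i\neq j$ (the spin system condition); equivalently $(\alpha\mathbf{1}+x)(\beta\mathbf{1}+y)=(\alpha\beta+f(x,y))\mathbf{1}+\beta x+\alpha y$ with $f(s_i,s_j)=\delta_{ij}$. A symmetry is an element $s$ with $s^2=\mathbf{1}$; for it $U_s(x)=2s(sx)-x$. A 1-automorphism is an automorphism $\Phi$ with $\Phi=U_s$ for some symmetry $s$. The matrix of a linear map $\psi$ with respect to the ordered basis $(v_1,\dots,v_{n+1})$ is $(x_{i,j})$ with $\psi(v_j)=\sum_i x_{i,j}v_i$. *)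

From HB Require Import structures.
From mathcomp Require Import all_boot all_order all_algebra.
Set Implicit Arguments. Unset Strict Implicit. Unset Printing Implicit Defensive.
Import GRing.Theory.
Local Open Scope ring_scope.

(* JSpin_n(F) is modelled on row vectors 'rV[F]_(n.+1): coordinate ord0 is the
   coefficient of the identity 1, coordinate i (i <> 0) the coefficient of s_i.
   The basis vector v_j is delta_mx 0 j. *)

(* (a 1 + x)(b 1 + y) = (a b + f(x,y)) 1 + b x + a y, with f(s_i,s_j)=delta_ij *)
Definition jmul (F : fieldType) (n : nat) (u v : 'rV[F]_n.+1) : 'rV[F]_n.+1 :=
  \row_i (if i == ord0
          then u 0 ord0 * v 0 ord0 + \sum_(j < n.+1 | j != ord0) u 0 j * v 0 j
          else v 0 ord0 * u 0 i + u 0 ord0 * v 0 i).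

Definition jone (F : fieldType) (n : nat) : 'rV[F]_n.+1 := delta_mx 0 ord0.

Definition jsymmetry (F : fieldType) (n : nat) (s : 'rV[F]_n.+1) : Prop :=
  jmul s s = jone F n.

Definition jU (F : fieldType) (n : nat) (s x : 'rV[F]_n.+1) : 'rV[F]_n.+1 :=
  (jmul s (jmul s x)) *+ 2 - x.

Definition jautomorphism (F : fieldType) (n : nat)
  (Phi : 'rV[F]_n.+1 -> 'rV[F]_n.+1) : Prop :=
  [/\ (forall (a : F) (x y : 'rV[F]_n.+1), Phi (a *: x + y) = a *: Phi x + Phi y),
      bijective Phi &
      (forall x y : 'rV[F]_n.+1, Phi (jmul x y) = jmul (Phi x) (Phi y))].

Definition one_automorphism (F : fieldType) (n : nat)
  (Phi : 'rV[F]_n.+1 -> 'rV[F]_n.+1) : Prop :=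
  jautomorphism Phi /\ exists s, jsymmetry s /\ Phi =1 jU s.

Definition jmatrix (F : fieldType) (n : nat)
  (Phi : 'rV[F]_n.+1 -> 'rV[F]_n.+1) : 'M[F]_n.+1 :=
  \matrix_(i, j) Phi (delta_mx 0 j) 0 i.

(* The multiplication operator x |-> s x of the spin factor is self-adjoint
   for the bilinear form making 1, s_1, ..., s_n orthonormal, i.e. its matrix
   in the basis V is symmetric; hence so is U_s = 2 L_s^2 - 1. *)
From mathcomp Require Import all_boot all_order all_algebra.
Set Implicit Arguments. Unset Strict Implicit. Unset Printing Implicit Defensive.
Import GRing.Theory.
Local Open Scope ring_scope.

Section SpinMultiplicationMatrix.

Variables (F : fieldType) (n : nat).
Implicit Types (s u x : 'rV[F]_n.+1) (A : 'M[F]_n.+1).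

Definition jmul_mx s : 'M[F]_n.+1 :=
  \matrix_(k, i) (if i == ord0 then s 0 k else if k == ord0 then s 0 i
                  else if k == i then s 0 ord0 else 0).

Lemma tr_jmul_mx s : (jmul_mx s)^T = jmul_mx s.
Proof.
apply/matrixP => k i; rewrite !mxE.
by case: (eqVneq i ord0) => hi; case: (eqVneq k ord0) => hk;
  subst; rewrite // eq_sym.
Qed.

Lemma jmul_mxE s u : jmul s u = u *m jmul_mx s.
Proof.
apply/rowP => i; rewrite /jmul !mxE [RHS](bigD1 ord0) //= mxE eqxx.
case: (eqVneq i ord0) => [->|hi] /=.
  rewrite mulrC; congr (_ + _); apply: eq_bigr => j _.
  by rewrite mxE eqxx mulrC.
rewrite (bigD1 i) //= big1 => [|j /andP[hj hji]].
  by rewrite mxE (negbTE hi) eqxx addr0 [s 0 ord0 * _]mulrC.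
by rewrite mxE (negbTE hi) (negbTE hj) (negbTE hji) mulr0.
Qed.

Definition jU_mx s : 'M[F]_n.+1 := (jmul_mx s *m jmul_mx s) *+ 2 - 1%:M.

Lemma jU_mxE s x : jU s x = x *m jU_mx s.
Proof. by rewrite /jU !jmul_mxE -mulmxA mulmxBr raddfMn mulmx1. Qed.

Lemma tr_jU_mx s : (jU_mx s)^T = jU_mx s.
Proof.
by rewrite /jU_mx linearB linearMn /= trmx_mul tr_jmul_mx tr_scalar_mx.
Qed.

Lemma jmatrix_mulmx (Phi : 'rV[F]_n.+1 -> 'rV[F]_n.+1) A :
  Phi =1 mulmx^~ A -> jmatrix Phi = A^T.
Proof. by move=> PhiE; apply/matrixP => i j; rewrite !mxE PhiE -rowE mxE. Qed.

End SpinMultiplicationMatrix.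

Theorem theorem4p3 (F : fieldType) (n : nat)
  (Phi : 'rV[F]_n.+1 -> 'rV[F]_n.+1) :
  one_automorphism Phi -> (jmatrix Phi)^T = jmatrix Phi.
Proof.
move=> [_ [s [_ PhiE]]].
have -> : jmatrix Phi = (jU_mx s)^T.
  by apply: jmatrix_mulmx => x; rewrite PhiE jU_mxE.
by rewrite trmxK tr_jU_mx.
Qed.
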